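(* Let $j\in\mathbb{N}$, $V_a^*>0$, let $V_a$ be continuous with $0<V_a^{min}\le V_a\le V_a^{max}<\infty$, $\hat V_a=V_a/V_a^*$, let $\mu$ and $x$ be continuous (and bounded on $(-\infty,t]$), $\beta>0$. For $i=1,\dots,j$ define $$x_i(t)=\int_{-\infty}^t g^i_{V_a^*}\Big(\int_\phi^t\hat V_a(s)ds\Big)\frac{\beta x(\phi)}{V_a(\phi)}\exp\!\Big[-\int_\phi^t\mu(x(s))ds\Big]d\phi,$$ where $g^i_b(u)=\frac{b^iu^{i-1}e^{-bu}}{\Gamma(i)}$. Then $$\frac{d}{dt}x_1(t)=\frac{\beta x(t)}{\hat V_a(t)}-V_a(t)x_1(t)-\mu(x(t))x_1(t),$$ $$\frac{d}{dt}x_i(t)=V_a(t)[x_{i-1}(t)-x_i(t)]-\mu(x(t))x_i(t),\qquad i=2,\dots,j.$$ In particular $x_j(t)=A_g(t):=\int_0^\infty g^j_{V_a^*}\big(\int_{t-\phi}^t\hat V_a(s)ds\big)\frac{\beta x(t-\phi)}{V_a(t-\phi)}e^{-\int_{t-\phi}^t\mu(x(s))ds}d\phi$ satisfies this transit chain.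
   Context: $g^i_b$ is the gamma density with shape $i$ and rate $b$; $A_g$ is the delay term of the gamma distributed state-dependent DDE. *)

From Stdlib Require Import Reals Factorial ClassicalEpsilon.
Open Scope R_scope.

(* Total Riemann integral: RiemannInt of some integrability proof if f is
   Riemann integrable between a and b (value is proof-independent), else 0. *)
Definition RInt (f : R -> R) (a b : R) : R :=
  match excluded_middle_informative (inhabited (Riemann_integrable f a b)) with
  | left H => RiemannInt (epsilon H (fun _ => True))
  | right _ => 0
  end.

Definition lim_minf (g : R -> R) (l : R) : Prop :=
  forall eps, 0 < eps -> exists M, forall a, a <= M -> Rabs (g a - l) < eps.

Definition lim_pinf (g : R -> R) (l : R) : Prop :=
  forall eps, 0 < eps -> exists M, forall b, M <= b -> Rabs (g b - l) < eps.

(* improper integral  \int_{-oo}^t f  (0 if the limit does not exist) *)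
Definition Int_minf (f : R -> R) (t : R) : R :=
  match excluded_middle_informative (exists l, lim_minf (fun a => RInt f a t) l) with
  | left H => proj1_sig (constructive_indefinite_description _ H)
  | right _ => 0
  end.

(* improper integral  \int_a^{+oo} f  (0 if the limit does not exist) *)
Definition Int_pinf (f : R -> R) (a : R) : R :=
  match excluded_middle_informative (exists l, lim_pinf (fun b => RInt f a b) l) with
  | left H => proj1_sig (constructive_indefinite_description _ H)
  | right _ => 0
  end.

Definition gdens (i : nat) (b u : R) : R :=
  b ^ i * u ^ (i - 1) * exp (- (b * u)) / INR (fact (i - 1)).

Definition xi (Vs : R) (Va mu x : R -> R) (beta : R) (i : nat) (t : R) : R :=
  Int_minf (fun phi =>
      gdens i Vs (RInt (fun s => Va s / Vs) phi t)
      * (beta * x phi / Va phi)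
      * exp (- RInt (fun s => mu (x s)) phi t)) t.

Definition A_g (Vs : R) (Va mu x : R -> R) (beta : R) (j : nat) (t : R) : R :=
  Int_pinf (fun phi =>
      gdens j Vs (RInt (fun s => Va s / Vs) (t - phi) t)
      * (beta * x (t - phi) / Va (t - phi))
      * exp (- RInt (fun s => mu (x s)) (t - phi) t)) 0.

(* Write F(t) = \int_0^t Va/Vs and C(t) = Vs F(t) + \int_0^t mu(x). The integrand of x_i at
   the entry time phi factors as
       coef_i e^(-C(t)) (F(t) - F(phi))^(i-1) w(phi),   w(phi) = beta x(phi) / Va(phi) e^(C(phi)),
   hence x_i(t) = coef_i e^(-C(t)) H_(i-1)(t) with the moments
       H_m(t) = \int_(-oo)^t (F(t) - F(phi))^m w(phi) dphi.
   Since C grows at speed at least Vmin, w decays exponentially at -oo, so every H_m exists.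
   The binomial identity H_(m+1) = F H_m - H_m[F w] and the fundamental theorem of calculus
   give H_0' = w and, by induction on m, H_(m+1)' = (m+1) (Va/Vs) H_m. The product rule applied
   to coef_i e^(-C) H_(i-1) then yields the transit chain, and the substitution phi := t - phi
   identifies x_j with A_g. *)

From Pilot Require Import Defs.
From Stdlib Require Import Reals Lra Lia FunctionalExtensionality ClassicalEpsilon Factorial.
From Coquelicot Require Import Coquelicot.
Open Scope R_scope.

Lemma continuity_continuous (f : R -> R) (t : R) : continuity f -> continuous f t.
Proof. intros H. apply continuity_pt_filterlim, H. Qed.

Lemma continuity_const_fun (k : R) : continuity (fun _ : R => k).
Proof. apply continuity_const. now intros ? ?. Qed.

Lemma ex_RInt_cont (f : R -> R) (a b : R) : continuity f -> ex_RInt f a b.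
Proof.
  intros H. apply (ex_RInt_continuous (V := R_CompleteNormedModule)).
  intros z _. apply continuity_continuous, H.
Qed.

Lemma RInt_total_eq (f : R -> R) (a b : R) : continuity f -> Defs.RInt f a b = RInt f a b.
Proof.
  intros H. unfold Defs.RInt.
  destruct excluded_middle_informative as [I | N].
  - symmetry. apply RInt_Reals.
  - exfalso. apply N. constructor.
    destruct (Rle_dec a b).
    + apply continuity_implies_RiemannInt; auto.
    + apply RiemannInt_P1, continuity_implies_RiemannInt; auto; lra.
Qed.

Lemma RInt_Chasles_cont (f : R -> R) (a b c : R) :
  continuity f -> RInt f a b + RInt f b c = RInt f a c.
Proof. intros H. apply (RInt_Chasles (V := R_CompleteNormedModule)); apply ex_RInt_cont, H. Qed.

Lemma RInt_lower_bound (f : R -> R) (a b k : R) :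
  a <= b -> continuity f -> (forall s, k <= f s) -> (b - a) * k <= RInt f a b.
Proof.
  intros ab C H.
  replace ((b - a) * k) with (RInt (fun _ => k) a b)
    by apply (RInt_const (V := R_CompleteNormedModule)).
  apply RInt_le; auto; apply ex_RInt_cont; [apply continuity_const_fun | exact C].
Qed.

Definition prim (f : R -> R) (t : R) : R := RInt f 0 t.

Lemma prim_deriv (f : R -> R) (t : R) : continuity f -> is_derive (prim f) t (f t).
Proof.
  intros C. apply (is_derive_RInt (V := R_CompleteNormedModule) f (prim f) 0 t).
  - apply filter_forall. intros b. apply (RInt_correct (V := R_CompleteNormedModule)).
    apply ex_RInt_cont, C.
  - apply continuity_continuous, C.
Qed.

Lemma prim_cont (f : R -> R) : continuity f -> continuity (prim f).
Proof.
  intros C t. apply derivable_continuous_pt. exists (f t).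
  apply is_derive_Reals, prim_deriv, C.
Qed.

Lemma RInt_prim (f : R -> R) (a b : R) : continuity f -> RInt f a b = prim f b - prim f a.
Proof. intros C. unfold prim. pose proof (RInt_Chasles_cont f 0 a b C). lra. Qed.

Lemma prim_lipschitz (f : R -> R) (K p t : R) :
  continuity f -> (forall s, Rabs (f s) <= K) -> p <= t ->
  Rabs (prim f t - prim f p) <= K * (t - p).
Proof.
  intros C H pt. rewrite <- RInt_prim by exact C. rewrite Rmult_comm.
  apply abs_RInt_le_const; auto. apply ex_RInt_cont, C.
Qed.

Definition is_Imin (f : R -> R) (t l : R) : Prop := is_lim (fun a => RInt f a t) m_infty l.

Lemma lim_minf_is_lim (g : R -> R) (l : R) : lim_minf g l <-> is_lim g m_infty l.
Proof.
  rewrite <- is_lim_spec. split.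
  - intros H [e He]. destruct (H e He) as [M HM]. exists M. intros a Ha. apply HM. lra.
  - intros H e He. destruct (H (mkposreal e He)) as [M HM]. exists (M - 1).
    intros a Ha. apply HM. lra.
Qed.

Lemma lim_pinf_is_lim (g : R -> R) (l : R) : lim_pinf g l <-> is_lim g p_infty l.
Proof.
  rewrite <- is_lim_spec. split.
  - intros H [e He]. destruct (H e He) as [M HM]. exists M. intros b Hb. apply HM. lra.
  - intros H e He. destruct (H (mkposreal e He)) as [M HM]. exists (M + 1).
    intros b Hb. apply HM. lra.
Qed.

Lemma Int_minf_eq (f : R -> R) (t l : R) : continuity f -> is_Imin f t l -> Int_minf f t = l.
Proof.
  intros C H.
  assert (E : forall a, Defs.RInt f a t = RInt f a t) by (intros; apply RInt_total_eq, C).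
  unfold Int_minf. destruct excluded_middle_informative as [Ex | N].
  - destruct constructive_indefinite_description as [l' Hl']. simpl.
    apply lim_minf_is_lim, (is_lim_ext _ _ _ _ E), is_lim_unique in Hl'.
    apply is_lim_unique in H. apply Rbar_finite_eq. now rewrite <- Hl', <- H.
  - exfalso. apply N. exists l.
    apply lim_minf_is_lim, (is_lim_ext _ _ _ _ (fun a => eq_sym (E a))), H.
Qed.

Lemma Int_pinf_eq (f : R -> R) (a l : R) :
  continuity f -> is_lim (fun b => RInt f a b) p_infty l -> Int_pinf f a = l.
Proof.
  intros C H.
  assert (E : forall b, Defs.RInt f a b = RInt f a b) by (intros; apply RInt_total_eq, C).
  unfold Int_pinf. destruct excluded_middle_informative as [Ex | N].
  - destruct constructive_indefinite_description as [l' Hl']. simpl.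
    apply lim_pinf_is_lim, (is_lim_ext _ _ _ _ E), is_lim_unique in Hl'.
    apply is_lim_unique in H. apply Rbar_finite_eq. now rewrite <- Hl', <- H.
  - exfalso. apply N. exists l.
    apply lim_pinf_is_lim, (is_lim_ext _ _ _ _ (fun b => eq_sym (E b))), H.
Qed.

Lemma is_Imin_scal (f : R -> R) (c t l : R) :
  continuity f -> is_Imin f t l -> is_Imin (fun p => c * f p) t (c * l).
Proof.
  intros C H. apply (is_lim_ext (fun a => c * RInt f a t)).
  - intros a. symmetry. apply (RInt_scal (V := R_CompleteNormedModule)), ex_RInt_cont, C.
  - apply (is_lim_scal_l _ c m_infty l H).
Qed.

Lemma is_Imin_minus (f g : R -> R) (t l1 l2 : R) : continuity f -> continuity g ->
  is_Imin f t l1 -> is_Imin g t l2 -> is_Imin (fun p => f p - g p) t (l1 - l2).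
Proof.
  intros Cf Cg H1 H2. apply (is_lim_ext (fun a => RInt f a t - RInt g a t)).
  - intros a. symmetry. apply (RInt_minus (V := R_CompleteNormedModule)); apply ex_RInt_cont; auto.
  - apply (is_lim_minus' _ _ m_infty l1 l2 H1 H2).
Qed.

Lemma is_Imin_shift (f : R -> R) (t s l : R) :
  continuity f -> is_Imin f t l -> is_Imin f s (l + RInt f t s).
Proof.
  intros C H. apply (is_lim_ext (fun a => RInt f a t + RInt f t s)).
  - intros a. apply RInt_Chasles_cont, C.
  - apply (is_lim_plus' _ _ m_infty l _ H (is_lim_const _ _)).
Qed.

Lemma is_Imin_deriv (f L : R -> R) (t : R) :
  continuity f -> (forall s, is_Imin f s (L s)) -> is_derive L t (f t).
Proof.
  intros C H.
  assert (E : forall s, L s = (L t - prim f t) + prim f s).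
  { intros s. replace (L t - prim f t + prim f s) with (L t + RInt f t s)
      by (rewrite RInt_prim by exact C; ring).
    apply Rbar_finite_eq. rewrite <- (is_lim_unique _ _ _ (H s)).
    apply is_lim_unique, is_Imin_shift; auto. }
  apply (is_derive_ext (fun s => (L t - prim f t) + prim f s)); [intros s; now rewrite <- E |].
  rewrite <- (Rplus_0_l (f t)).
  apply (is_derive_plus (fun _ => L t - prim f t) (prim f));
    [exact (is_derive_const (L t - prim f t) t) | apply prim_deriv, C].
Qed.

Lemma Int_pinf_reflect (f : R -> R) (t l : R) :
  continuity f -> is_Imin f t l -> Int_pinf (fun p => f (t - p)) 0 = l.
Proof.
  intros C H. assert (C' : continuity (fun p => f (t - p))).
  { intros p. apply (continuity_pt_comp (fun p => t - p) f).
    - apply derivable_continuous_pt. auto_derive. exact I.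
    - apply C. }
  apply Int_pinf_eq; [exact C' |].
  apply (is_lim_ext (fun b => RInt f (t - b) t)).
  - (* the substitution [p = t - y] on [0, b] *)
    intros b.
    assert (Lin := RInt_comp_lin (V := R_CompleteNormedModule) f (-1) t 0 b (ex_RInt_cont _ _ _ C)).
    replace (-1 * 0 + t) with t in Lin by ring. replace (-1 * b + t) with (t - b) in Lin by ring.
    rewrite (RInt_ext (V := R_CompleteNormedModule) _ (fun p => -1 * f (t - p))) in Lin
      by (intros p _; unfold scal; simpl; unfold mult; simpl; do 2 f_equal; ring).
    rewrite (RInt_scal (V := R_CompleteNormedModule)) in Lin by apply ex_RInt_cont, C'.
    rewrite <- (opp_RInt_swap (V := R_CompleteNormedModule)) by apply ex_RInt_cont, C.
    rewrite <- Lin. unfold scal, opp; simpl; unfold mult; simpl. ring.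
  - apply is_lim_spec. apply is_lim_spec in H. intros e.
    destruct (H e) as [M HM]. exists (t - M). intros b Hb. apply HM. lra.
Qed.

Lemma exp_le (x y : R) : x <= y -> exp x <= exp y.
Proof. intros [H | ->]; [left; apply exp_increasing, H | right; reflexivity]. Qed.

Definition exp_dominated (c M t : R) (v : R -> R) : Prop :=
  forall p, p <= t -> Rabs (v p) <= M * exp (c * p).

Definition exp_decaying (v : R -> R) : Prop :=
  continuity v /\ exists c, 0 < c /\ forall t, exists M, exp_dominated c M t v.

Lemma exp_dominated_nonneg (c M t : R) (v : R -> R) : exp_dominated c M t v -> 0 <= M.
Proof.
  intros D. pose proof (D t (Rle_refl t)). pose proof (Rabs_pos (v t)).
  pose proof (exp_pos (c * t)). nra.
Qed.

Lemma RInt_exp_lin (M c a b : R) :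
  0 < c -> RInt (fun p => M * exp (c * p)) a b = M / c * (exp (c * b) - exp (c * a)).
Proof.
  intros Hc. apply (is_RInt_unique (V := R_CompleteNormedModule)).
  replace (M / c * (exp (c * b) - exp (c * a)))
    with (minus (M / c * exp (c * b)) (M / c * exp (c * a)))
    by (unfold minus, plus, opp; simpl; ring).
  apply (is_RInt_derive (V := R_CompleteNormedModule) (fun p => M / c * exp (c * p))).
  - intros p _. auto_derive; [exact I | field; lra].
  - intros p _. apply continuity_continuous. reg.
Qed.

Lemma RInt_dominated_tail (v : R -> R) (c M t a b : R) :
  continuity v -> 0 < c -> exp_dominated c M t v -> a <= b -> b <= t ->
  Rabs (RInt v a b) <= M / c * exp (c * b).
Proof.
  intros C Hc D ab bt.
  pose proof (exp_dominated_nonneg c M t v D) as HM.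
  eapply Rle_trans; [apply abs_RInt_le; auto; apply ex_RInt_cont, C |].
  eapply Rle_trans; [apply (RInt_le _ (fun p => M * exp (c * p))); auto |].
  - apply ex_RInt_cont. intros y.
    apply (continuity_pt_comp v Rabs); [apply C | apply Rcontinuity_abs].
  - apply ex_RInt_cont. reg.
  - intros y Hy. apply D. lra.
  - rewrite RInt_exp_lin by exact Hc. pose proof (exp_pos (c * a)).
    assert (0 <= M / c) by (apply Rdiv_le_0_compat; lra). nra.
Qed.

Lemma exp_tail_small (c M e : R) :
  0 < c -> 0 <= M -> 0 < e -> exists B, forall b, b <= B -> M / c * exp (c * b) < e.
Proof.
  intros Hc HM He. set (d := e * c / (M + 1)).
  assert (Hd : 0 < d) by (unfold d; apply Rdiv_lt_0_compat; nra).
  exists (ln d / c). intros b Hb.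
  assert (Eb : exp (c * b) <= d).
  { rewrite <- (exp_ln d Hd). apply exp_le. apply (Rmult_le_compat_l c) in Hb; [| lra].
    replace (c * (ln d / c)) with (ln d) in Hb by (field; lra). exact Hb. }
  apply Rle_lt_trans with (M / c * d).
  - apply Rmult_le_compat_l; [apply Rdiv_le_0_compat |]; lra.
  - unfold d. replace (M / c * (e * c / (M + 1))) with (e * (M / (M + 1))) by (field; lra).
    assert (M / (M + 1) < 1) by (apply Rmult_lt_reg_r with (M + 1); [lra |];
      unfold Rdiv; rewrite Rmult_assoc, Rinv_l; lra).
    nra.
Qed.

(* Cauchy criterion at -oo: an exponentially decaying function is integrable on ]-oo, t]. *)
Lemma exp_decaying_Imin (v : R -> R) (t : R) : exp_decaying v -> exists l, is_Imin v t l.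
Proof.
  intros [C [c [Hc HD]]]. destruct (HD t) as [M D].
  pose proof (exp_dominated_nonneg c M t v D) as HM.
  assert (Cauchy : forall a b B, a <= b -> b <= Rmin B t ->
            Rabs (RInt v a t - RInt v b t) <= M / c * exp (c * b)).
  { intros a b B ab bB.
    replace (RInt v a t - RInt v b t) with (RInt v a b)
      by (pose proof (RInt_Chasles_cont v a b t C); lra).
    apply (RInt_dominated_tail v c M t); auto. apply Rle_trans with (1 := bB), Rmin_r. }
  destruct (proj1 (filterlim_locally_cauchy (U := R_CompleteSpace) (F := Rbar_locally m_infty)
                      (fun a => RInt v a t))) as [l Hl]; [| now exists l].
  intros [e He]. destruct (exp_tail_small c M e Hc HM He) as [B HB].
  exists (fun a => a < Rmin B t). split; [now exists (Rmin B t) |].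
  intros a b Ha Hb. change (Rabs (RInt v b t - RInt v a t) < e).
  destruct (Rle_dec a b) as [ab | ba].
  - rewrite Rabs_minus_sym. eapply Rle_lt_trans; [apply (Cauchy a b B); lra |].
    apply HB. pose proof (Rmin_l B t). lra.
  - eapply Rle_lt_trans; [apply (Cauchy b a B); lra |].
    apply HB. pose proof (Rmin_l B t). lra.
Qed.

Definition affine_growth (g : R -> R) : Prop :=
  forall t, exists A B, 0 <= B /\ forall p, p <= t -> Rabs (g p) <= A + B * (t - p).

(* [(t - p) e^(c p / 2) <= (2 / c) e^(c t / 2)] for [p <= t]: the linear factor is absorbed
   by half of the exponential decay. *)
Lemma affine_exp_bound (c t p : R) :
  0 < c -> p <= t -> (t - p) * exp (c / 2 * p) <= 2 / c * exp (c / 2 * t).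
Proof.
  intros Hc pt.
  assert (H1 : c / 2 * (t - p) <= exp (c / 2 * (t - p))).
  { pose proof (exp_ineq1_le (c / 2 * (t - p))). lra. }
  replace (exp (c / 2 * t)) with (exp (c / 2 * (t - p)) * exp (c / 2 * p))
    by (rewrite <- exp_plus; f_equal; ring).
  pose proof (exp_pos (c / 2 * p)).
  apply Rmult_le_reg_l with (c / 2); [lra |].
  replace (c / 2 * (2 / c * (exp (c / 2 * (t - p)) * exp (c / 2 * p))))
    with (exp (c / 2 * (t - p)) * exp (c / 2 * p)) by (field; lra).
  rewrite <- Rmult_assoc. apply Rmult_le_compat_r; lra.
Qed.

(* Exponential decay survives multiplication by a continuous function of affine growth,
   at half the rate: on ]-oo, t], [|g v| <= (A + B (t - p)) M e^(c p)
   <= M (A + 2 B / c) e^(c t / 2) e^(c p / 2)]. *)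
Lemma exp_decaying_mul (g v : R -> R) :
  continuity g -> affine_growth g -> exp_decaying v -> exp_decaying (fun p => g p * v p).
Proof.
  intros Cg Gg [Cv [c [Hc HD]]].
  split; [intros p; apply continuity_pt_mult; auto |].
  exists (c / 2). split; [lra |]. intros t.
  destruct (HD t) as [M D]. destruct (Gg t) as [A [B [HB G]]].
  exists (M * (A + B * (2 / c)) * exp (c / 2 * t)). intros p pt.
  pose proof (exp_dominated_nonneg c M t v D) as HM.
  assert (HA : 0 <= A) by (pose proof (G t (Rle_refl t)); pose proof (Rabs_pos (g t)); lra).
  assert (Half : exp (c * p) = exp (c / 2 * p) * exp (c / 2 * p))
    by (rewrite <- exp_plus; f_equal; field).
  assert (Ep : exp (c / 2 * p) <= exp (c / 2 * t)) by (apply exp_le; nra).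
  pose proof (affine_exp_bound c t p Hc pt) as Lin.
  pose proof (exp_pos (c / 2 * p)). pose proof (exp_pos (c / 2 * t)).
  rewrite Rabs_mult.
  apply Rle_trans with ((A + B * (t - p)) * (M * exp (c * p))).
  { apply Rmult_le_compat; auto using Rabs_pos. }
  rewrite Half.
  replace ((A + B * (t - p)) * (M * (exp (c / 2 * p) * exp (c / 2 * p))))
    with (M * (A * exp (c / 2 * p) + B * ((t - p) * exp (c / 2 * p))) * exp (c / 2 * p)) by ring.
  apply Rmult_le_compat_r; [lra |].
  replace (M * (A + B * (2 / c)) * exp (c / 2 * t))
    with (M * (A * exp (c / 2 * t) + B * (2 / c * exp (c / 2 * t)))) by ring.
  apply Rmult_le_compat_l; [exact HM |].
  apply Rplus_le_compat; apply Rmult_le_compat_l; auto.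
Qed.

Lemma affine_growth_prim (f : R -> R) (K : R) :
  continuity f -> (forall s, Rabs (f s) <= K) -> affine_growth (prim f).
Proof.
  intros C H t. exists (Rabs (prim f t)), K. split.
  - pose proof (H 0). pose proof (Rabs_pos (f 0)). lra.
  - intros p pt. pose proof (prim_lipschitz f K p t C H pt).
    replace (prim f p) with (prim f t - (prim f t - prim f p)) by ring.
    eapply Rle_trans; [apply Rabs_triang |]. rewrite Rabs_Ropp. lra.
Qed.

Lemma affine_growth_sub (s : R) (g : R -> R) : affine_growth g -> affine_growth (fun p => s - g p).
Proof.
  intros G t. destruct (G t) as [A [B [HB H]]]. exists (Rabs s + A), B. split; [exact HB |].
  intros p pt. pose proof (H p pt). pose proof (Rabs_triang s (- g p)).
  rewrite Rabs_Ropp in *. unfold Rminus. lra.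
Qed.

Section Moments.

Variable f : R -> R.
Variable K : R.
Hypothesis f_cont : continuity f.
Hypothesis f_bounded : forall s, Rabs (f s) <= K.

Lemma exp_decaying_pow (v : R -> R) (s : R) (m : nat) :
  exp_decaying v -> exp_decaying (fun p => (s - prim f p) ^ m * v p).
Proof.
  intros D. induction m as [| m IH].
  - replace (fun p => (s - prim f p) ^ 0 * v p) with v; [exact D |].
    apply functional_extensionality. intros p. ring.
  - replace (fun p => (s - prim f p) ^ S m * v p)
      with (fun p => (s - prim f p) * ((s - prim f p) ^ m * v p))
      by (apply functional_extensionality; intros p; simpl; ring).
    apply exp_decaying_mul; [| apply affine_growth_sub, (affine_growth_prim f K) | exact IH]; auto.
    intros p. apply continuity_pt_minus; [apply continuity_const_fun | apply prim_cont, f_cont].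
Qed.

Lemma exp_decaying_prim_mul (v : R -> R) : exp_decaying v -> exp_decaying (fun p => prim f p * v p).
Proof. apply exp_decaying_mul; [apply prim_cont | apply (affine_growth_prim f K)]; auto. Qed.

Definition moment (v : R -> R) (m : nat) (t : R) : R :=
  Int_minf (fun p => (prim f t - prim f p) ^ m * v p) t.

Lemma moment_spec (v : R -> R) (m : nat) (t : R) :
  exp_decaying v -> is_Imin (fun p => (prim f t - prim f p) ^ m * v p) t (moment v m t).
Proof.
  intros D. pose proof (exp_decaying_pow v (prim f t) m D) as Dm.
  destruct (exp_decaying_Imin _ t Dm) as [l Hl].
  unfold moment. rewrite (Int_minf_eq _ _ _ (proj1 Dm) Hl). exact Hl.
Qed.

(* Binomial recursion: [(F t - F p)^(m+1) = F t (F t - F p)^m - (F t - F p)^m F p]. *)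
Lemma moment_succ (v : R -> R) (m : nat) (t : R) :
  exp_decaying v ->
  moment v (S m) t = prim f t * moment v m t - moment (fun p => prim f p * v p) m t.
Proof.
  intros D. pose proof (exp_decaying_prim_mul v D) as D'.
  apply Int_minf_eq; [apply (exp_decaying_pow v _ (S m) D) |].
  replace (fun p => (prim f t - prim f p) ^ S m * v p) with
    (fun p => prim f t * ((prim f t - prim f p) ^ m * v p)
              - (prim f t - prim f p) ^ m * (prim f p * v p))
    by (apply functional_extensionality; intros p; simpl; ring).
  apply is_Imin_minus.
  - intros p.
    apply continuity_pt_mult; [apply continuity_const_fun | apply (exp_decaying_pow v _ m D)].
  - apply (exp_decaying_pow _ _ m D').
  - apply is_Imin_scal; [apply (exp_decaying_pow v _ m D) | apply moment_spec, D].
  - apply moment_spec, D'.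
Qed.

Lemma moment0_deriv (v : R -> R) (t : R) : exp_decaying v -> is_derive (moment v 0) t (v t).
Proof.
  intros D. apply (is_Imin_deriv v); [apply D |]. intros s.
  pose proof (moment_spec v 0 s D) as H. simpl in H.
  replace (fun p => 1 * v p) with v in H by (apply functional_extensionality; intros; ring).
  exact H.
Qed.

(* Differentiating the binomial recursion [moment_succ] by the product rule. *)
Lemma moment_succ_deriv (v : R -> R) (m : nat) (t dH dH' : R) :
  exp_decaying v -> is_derive (moment v m) t dH ->
  is_derive (moment (fun p => prim f p * v p) m) t dH' ->
  is_derive (moment v (S m)) t (f t * moment v m t + prim f t * dH - dH').
Proof.
  intros D HdH HdH'.
  apply (is_derive_ext (fun s => prim f s * moment v m s - moment (fun p => prim f p * v p) m s));
    [intros s; symmetry; apply moment_succ, D |].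
  apply (is_derive_minus (fun s => prim f s * moment v m s)); [| exact HdH'].
  apply (is_derive_mult (prim f) (moment v m)); [apply prim_deriv, f_cont | exact HdH |].
  intros; apply Rmult_comm.
Qed.

Lemma moment_deriv (m : nat) : forall (v : R -> R) (t : R), exp_decaying v ->
  is_derive (moment v (S m)) t (INR (S m) * f t * moment v m t).
Proof.
  induction m as [| m IH]; intros v t D; pose proof (exp_decaying_prim_mul v D) as D'.
  - replace (INR 1 * f t * moment v 0 t)
      with (f t * moment v 0 t + prim f t * v t - prim f t * v t) by (simpl; ring).
    apply moment_succ_deriv; [exact D | apply moment0_deriv, D |].
    apply (moment0_deriv (fun p => prim f p * v p)), D'.
  - replace (INR (S (S m)) * f t * moment v (S m) t)
      with (f t * moment v (S m) t + prim f t * (INR (S m) * f t * moment v m t)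
            - INR (S m) * f t * moment (fun p => prim f p * v p) m t)
      by (rewrite (moment_succ v m t D), !S_INR; ring).
    apply moment_succ_deriv; [exact D | apply IH, D |].
    apply (IH (fun p => prim f p * v p)), D'.
Qed.

End Moments.

Section TransitChain.

Variables (Vs : R) (Va mu x : R -> R) (beta Vmin Vmax : R).
Hypothesis Vs_pos : 0 < Vs.
Hypothesis Va_cont : continuity Va.
Hypothesis Vmin_pos : 0 < Vmin.
Hypothesis Va_bounds : forall s, Vmin <= Va s <= Vmax.
Hypothesis mu_cont : continuity mu.
Hypothesis mu_nonneg : forall y, 0 <= mu y.
Hypothesis x_cont : continuity x.
Hypothesis x_bounded : forall t, exists M, forall s, s <= t -> Rabs (x s) <= M.

Definition rate (s : R) : R := Va s / Vs.
Definition hazard (s : R) : R := mu (x s).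

(* [clock t - clock phi = Vs \int_phi^t rate + \int_phi^t hazard] is the total exponent
   of the integrand of [xi i] at entry time [phi]. *)
Definition clock (t : R) : R := Vs * prim rate t + prim hazard t.

(* The part of the integrand that depends on the entry time only. *)
Definition weight (p : R) : R := beta * x p / Va p * exp (clock p).

Definition coef (i : nat) : R := Vs ^ i / INR (fact (i - 1)).

Lemma Va_neq0 (s : R) : Va s <> 0.
Proof. pose proof (Va_bounds s). lra. Qed.

Lemma rate_cont : continuity rate.
Proof. intros s. apply continuity_pt_div; [apply Va_cont | apply continuity_const_fun | lra]. Qed.

Lemma rate_bounded (s : R) : Rabs (rate s) <= Vmax / Vs.
Proof.
  pose proof (Va_bounds s). unfold rate. rewrite Rabs_pos_eq by (apply Rdiv_le_0_compat; lra).
  apply Rmult_le_compat_r; [left; apply Rinv_0_lt_compat |]; lra.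
Qed.

Lemma hazard_cont : continuity hazard.
Proof. intros s. apply continuity_pt_comp; auto. Qed.

Lemma clock_deriv (t : R) : is_derive clock t (Va t + mu (x t)).
Proof.
  replace (Va t + mu (x t)) with (Vs * rate t + hazard t) by (unfold rate, hazard; field; lra).
  apply (is_derive_plus (fun s => Vs * prim rate s) (prim hazard)).
  - apply is_derive_scal, prim_deriv, rate_cont.
  - apply prim_deriv, hazard_cont.
Qed.

Lemma clock_cont : continuity clock.
Proof.
  intros t. apply derivable_continuous_pt. exists (Va t + mu (x t)).
  apply is_derive_Reals, clock_deriv.
Qed.

Lemma clock_increment (p t : R) : p <= t -> Vmin * (t - p) <= clock t - clock p.
Proof.
  intros pt. unfold clock.
  assert (Ir : (t - p) * (Vmin / Vs) <= prim rate t - prim rate p).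
  { rewrite <- RInt_prim by exact rate_cont. apply RInt_lower_bound; auto using rate_cont.
    intros s. pose proof (Va_bounds s). unfold rate.
    apply Rmult_le_compat_r; [left; apply Rinv_0_lt_compat |]; lra. }
  assert (Ih : (t - p) * 0 <= prim hazard t - prim hazard p).
  { rewrite <- RInt_prim by exact hazard_cont. apply RInt_lower_bound; auto using hazard_cont.
    intros s. apply mu_nonneg. }
  apply (Rmult_le_compat_l Vs) in Ir; [| lra].
  replace (Vs * ((t - p) * (Vmin / Vs))) with (Vmin * (t - p)) in Ir by (field; lra).
  lra.
Qed.

(* [|weight p| <= |beta| Mx / Vmin e^(clock t - Vmin t) e^(Vmin p)] on ]-oo, t]. *)
Lemma weight_decaying : exp_decaying weight.
Proof.
  split.
  - intros p. unfold weight. apply continuity_pt_mult.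
    + apply continuity_pt_div; [| apply Va_cont | apply Va_neq0].
      apply continuity_pt_mult; [apply continuity_const_fun | apply x_cont].
    + apply (continuity_pt_comp clock exp); [apply clock_cont |].
      apply derivable_continuous_pt, derivable_pt_exp.
  - exists Vmin. split; [exact Vmin_pos |]. intros t. destruct (x_bounded t) as [Mx HMx].
    exists (Rabs beta * Mx / Vmin * exp (clock t - Vmin * t)). intros p pt.
    pose proof (Va_bounds p). pose proof (HMx p pt).
    assert (Factor : Rabs (beta * x p / Va p) <= Rabs beta * Mx / Vmin).
    { unfold Rdiv. rewrite !Rabs_mult, Rabs_inv, (Rabs_pos_eq (Va p)) by lra.
      rewrite !Rmult_assoc. apply Rmult_le_compat_l; [apply Rabs_pos |].
      apply Rmult_le_compat; auto using Rabs_pos.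
      - left; apply Rinv_0_lt_compat; lra.
      - apply Rinv_le_contravar; lra. }
    assert (Decay : exp (clock p) <= exp (clock t - Vmin * t) * exp (Vmin * p)).
    { rewrite <- exp_plus. apply exp_le. pose proof (clock_increment p t pt). lra. }
    unfold weight. rewrite Rabs_mult, (Rabs_pos_eq (exp _)) by (left; apply exp_pos).
    rewrite (Rmult_assoc (Rabs beta * Mx / Vmin)).
    apply Rmult_le_compat; auto using Rabs_pos. left; apply exp_pos.
Qed.

Definition stage_integrand (i : nat) (t p : R) : R :=
  coef i * exp (- clock t) * ((prim rate t - prim rate p) ^ (i - 1) * weight p).

(* The integrand of [xi i] separates into a factor of [t] and the moment integrand:
   [g^i_Vs(\int_phi^t rate) = coef i (F t - F phi)^(i-1) e^(-Vs (F t - F phi))], [F = prim rate]. *)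
Lemma integrand_factor (i : nat) (t : R) :
  (fun phi => gdens i Vs (Defs.RInt (fun s => Va s / Vs) phi t) * (beta * x phi / Va phi)
              * exp (- Defs.RInt (fun s => mu (x s)) phi t))
  = stage_integrand i t.
Proof.
  apply functional_extensionality. intros p.
  change (fun s => Va s / Vs) with rate. change (fun s => mu (x s)) with hazard.
  rewrite !RInt_total_eq, !RInt_prim by auto using rate_cont, hazard_cont.
  unfold stage_integrand, gdens, coef, weight.
  set (dF := prim rate t - prim rate p). set (dH := prim hazard t - prim hazard p).
  assert (Exps : exp (- (Vs * dF)) * exp (- dH) = exp (- clock t) * exp (clock p))
    by (unfold dF, dH, clock; rewrite <- !exp_plus; f_equal; ring).
  pose proof (INR_fact_neq_0 (i - 1)). pose proof (Va_neq0 p).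
  transitivity (Vs ^ i / INR (fact (i - 1)) * dF ^ (i - 1) * (beta * x p / Va p)
                * (exp (- (Vs * dF)) * exp (- dH))); [field; auto |].
  rewrite Exps. field. auto.
Qed.

Lemma integrand_cont (i : nat) (t : R) : continuity (stage_integrand i t).
Proof.
  intros p. unfold stage_integrand. apply continuity_pt_mult; [apply continuity_const_fun |].
  apply (exp_decaying_pow rate (Vmax / Vs)); auto using rate_cont, rate_bounded, weight_decaying.
Qed.

Lemma xi_spec (i : nat) (t : R) :
  is_Imin (stage_integrand i t) t (coef i * exp (- clock t) * moment rate weight (i - 1) t).
Proof.
  apply is_Imin_scal.
  - apply (exp_decaying_pow rate (Vmax / Vs)); auto using rate_cont, rate_bounded, weight_decaying.
  - apply (moment_spec rate (Vmax / Vs)); auto using rate_cont, rate_bounded, weight_decaying.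
Qed.

Lemma xi_factor (i : nat) :
  xi Vs Va mu x beta i = fun t => coef i * exp (- clock t) * moment rate weight (i - 1) t.
Proof.
  apply functional_extensionality. intros t. unfold xi. rewrite integrand_factor.
  apply Int_minf_eq; [apply integrand_cont | apply xi_spec].
Qed.

(* Product rule for [coef i e^(-clock t) H(t)]: the factor [e^(-clock t)] produces the loss
   term [-(Va + mu(x)) x_i]. *)
Lemma xi_deriv_from_moment (i m : nat) (t dH : R) :
  is_derive (moment rate weight m) t dH ->
  is_derive (fun s => coef i * exp (- clock s) * moment rate weight m s) t
    (- (Va t + mu (x t)) * (coef i * exp (- clock t) * moment rate weight m t)
     + coef i * exp (- clock t) * dH).
Proof.
  intros HdH.
  apply (is_derive_ext (fun s => coef i * (exp (- clock s) * moment rate weight m s)));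
    [intros s; now rewrite Rmult_assoc |].
  replace (- (Va t + mu (x t)) * (coef i * exp (- clock t) * moment rate weight m t)
           + coef i * exp (- clock t) * dH)
    with (coef i * ((- (Va t + mu (x t)) * exp (- clock t)) * moment rate weight m t
                    + exp (- clock t) * dH)) by ring.
  apply is_derive_scal.
  apply (is_derive_mult (fun s => exp (- clock s))); [| exact HdH | intros; apply Rmult_comm].
  apply (is_derive_comp exp (fun s => - clock s)); [apply is_derive_exp |].
  apply (is_derive_opp clock), clock_deriv.
Qed.

(* At the first stage the derivative of [H_0] is the weight itself, giving the inflow. *)
Lemma inflow_eq (t : R) : coef 1 * exp (- clock t) * weight t = beta * x t / (Va t / Vs).
Proof.
  unfold coef, weight.
  replace (Vs ^ 1 / INR (fact (1 - 1)) * exp (- clock t) * (beta * x t / Va t * exp (clock t)))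
    with (Vs * (beta * x t / Va t) * (exp (- clock t) * exp (clock t)))
    by (simpl; field; apply Va_neq0).
  rewrite <- exp_plus, Rplus_opp_l, exp_0. field. split; [lra | apply Va_neq0].
Qed.

(* [coef (n+2) (n+1) rate = Va coef (n+1)]: the gain term of stage [n+2] is [Va x_(n+1)]. *)
Lemma coef_step (n : nat) (t : R) : coef (S (S n)) * (INR (S n) * rate t) = Va t * coef (S n).
Proof.
  unfold coef, rate.
  replace (S (S n) - 1)%nat with (S n) by lia. replace (S n - 1)%nat with n by lia.
  rewrite fact_simpl, mult_INR, <- !tech_pow_Rmult, S_INR.
  pose proof (INR_fact_neq_0 n). pose proof (pos_INR n).
  field. repeat split; try assumption; lra.
Qed.

Lemma xi_deriv_first (t : R) :
  derivable_pt_lim (xi Vs Va mu x beta 1) t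
    (beta * x t / (Va t / Vs) - Va t * xi Vs Va mu x beta 1 t - mu (x t) * xi Vs Va mu x beta 1 t).
Proof.
  apply is_derive_Reals. rewrite xi_factor. simpl (1 - 1)%nat. rewrite <- inflow_eq.
  replace (coef 1 * exp (- clock t) * weight t
           - Va t * (coef 1 * exp (- clock t) * moment rate weight 0 t)
           - mu (x t) * (coef 1 * exp (- clock t) * moment rate weight 0 t))
    with (- (Va t + mu (x t)) * (coef 1 * exp (- clock t) * moment rate weight 0 t)
          + coef 1 * exp (- clock t) * weight t) by ring.
  apply xi_deriv_from_moment, (moment0_deriv rate (Vmax / Vs));
    auto using rate_cont, rate_bounded, weight_decaying.
Qed.

Lemma xi_deriv_succ (n : nat) (t : R) :
  derivable_pt_lim (xi Vs Va mu x beta (S (S n))) t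
    (Va t * (xi Vs Va mu x beta (S (S n) - 1) t - xi Vs Va mu x beta (S (S n)) t)
     - mu (x t) * xi Vs Va mu x beta (S (S n)) t).
Proof.
  apply is_derive_Reals. rewrite !xi_factor.
  replace (S (S n) - 1)%nat with (S n) by lia. replace (S n - 1)%nat with n by lia.
  assert (Gain :
    Va t * (coef (S n) * exp (- clock t) * moment rate weight n t)
    = coef (S (S n)) * exp (- clock t) * (INR (S n) * rate t * moment rate weight n t)).
  { transitivity (Va t * coef (S n) * (exp (- clock t) * moment rate weight n t)); [ring |].
    rewrite <- coef_step. ring. }
  replace (Va t * (coef (S n) * exp (- clock t) * moment rate weight n t
                   - coef (S (S n)) * exp (- clock t) * moment rate weight (S n) t)
           - mu (x t) * (coef (S (S n)) * exp (- clock t) * moment rate weight (S n) t))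
    with (- (Va t + mu (x t)) * (coef (S (S n)) * exp (- clock t) * moment rate weight (S n) t)
          + coef (S (S n)) * exp (- clock t) * (INR (S n) * rate t * moment rate weight n t))
    by (rewrite <- Gain; ring).
  apply xi_deriv_from_moment, (moment_deriv rate (Vmax / Vs));
    auto using rate_cont, rate_bounded, weight_decaying.
Qed.

Lemma xi_eq_A_g (i : nat) (t : R) : xi Vs Va mu x beta i t = A_g Vs Va mu x beta i t.
Proof.
  unfold A_g, xi.
  set (F := fun phi => gdens i Vs (Defs.RInt (fun s => Va s / Vs) phi t) * (beta * x phi / Va phi)
                       * exp (- Defs.RInt (fun s => mu (x s)) phi t)).
  change (Int_minf F t = Int_pinf (fun phi => F (t - phi)) 0).
  pose proof (integrand_factor i t) as EF. fold F in EF.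
  pose proof (integrand_cont i t) as CF. pose proof (xi_spec i t) as IF. rewrite <- EF in CF, IF.
  rewrite (Int_minf_eq F t _ CF IF). symmetry. exact (Int_pinf_reflect F t _ CF IF).
Qed.

End TransitChain.

Theorem lemma4p3 (j : nat) (Vs : R) (Va mu x : R -> R) (beta Vmin Vmax : R) :
  0 < Vs ->
  continuity Va -> 0 < Vmin -> (forall s, Vmin <= Va s <= Vmax) ->
  continuity mu -> (forall y, 0 <= mu y) ->
  continuity x -> (forall t, exists M, forall s, s <= t -> Rabs (x s) <= M) ->
  0 < beta ->
  ((1 <= j)%nat -> forall t,
      derivable_pt_lim (xi Vs Va mu x beta 1) t
        (beta * x t / (Va t / Vs) - Va t * xi Vs Va mu x beta 1 t
         - mu (x t) * xi Vs Va mu x beta 1 t)) /\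
  (forall i : nat, (2 <= i <= j)%nat -> forall t,
      derivable_pt_lim (xi Vs Va mu x beta i) t
        (Va t * (xi Vs Va mu x beta (i - 1) t - xi Vs Va mu x beta i t)
         - mu (x t) * xi Vs Va mu x beta i t)) /\
  ((1 <= j)%nat -> forall t, xi Vs Va mu x beta j t = A_g Vs Va mu x beta j t).
Proof.
  intros HVs CVa HVmin HVa Cmu Hmu Cx Hx _.
  split; [| split].
  - intros _ t. exact (xi_deriv_first Vs Va mu x beta Vmin Vmax HVs CVa HVmin HVa Cmu Hmu Cx Hx t).
  - intros i Hi t. destruct i as [| [| n]]; [lia | lia |].
    exact (xi_deriv_succ Vs Va mu x beta Vmin Vmax HVs CVa HVmin HVa Cmu Hmu Cx Hx n t).
  - intros _ t. exact (xi_eq_A_g Vs Va mu x beta Vmin Vmax HVs CVa HVmin HVa Cmu Hmu Cx Hx j t).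
Qed.
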